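(* Let $(G,d)$ be a $p$-uniformly convex space with constant $c>0$, $D\subset G$, $T:D\rightrightarrows G$, $y\in D$, $\tau\in(0,1)$, $T_\tau=(1-\tau)\mathrm{Id}\oplus\tau T$, and for $x_+\in T(x)$ let $x_\tau=(1-\tau)x\oplus\tau x_+$. (i) Suppose $T$ is pointwise almost nonexpansive at $y$ on $D$ with violation $\epsilon$ (so $T(y)$ and $T_\tau(y)$ are single points). If for all $x\in D$ and $x_+\in T(x)$ $$\tfrac{\tau}{1-\tau}\psi^{(p,c)}(x,y,x_\tau,T_\tau(y))\le(1-\tau)\tau\psi^{(p,c)}(x,y,x_+,T(y))-\tfrac{2-c}{2}(1-\tau)\tau\big(d(y,x_+)^p+d(x,T(y))^p\big),$$ then $T_\tau$ is pointwise a$\alpha$-fne at $y$ on $D$ with constant $\alpha=1-\tau$ and violation $\epsilon_\tau=\tau\big(2\tau+(1-\tau)c+\epsilon(\tau+\frac c2(1-\tau))-2\big)$. (ii) Suppose $T$ is pointwise a$\alpha$-fne at $y$ on $D$ with constant $\alpha\in(0,1)$ and violation $\epsilon$. If there is $\alpha_\tau\in(0,1)$ such that for all $x\in D$ and $x_+\in T(x)$ $$\tfrac{1-\alpha_\tau}{\alpha_\tau}\psi^{(p,c)}(x,y,x_\tau,T_\tau(y))\le\tau^2\tfrac{1-\alpha}{\alpha}\psi^{(p,c)}(x,y,x_+,T(y))+2(1-\tau)\tau d(x,y)^p-2(1-\tau)\tau\Delta^{(p,c)}(x,y,x_+,T(y))-\tfrac{2-c}{2}(1-\tau)\tau\big(d(y,x_+)^p+d(x,T(y))^p\big),$$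 then $T_\tau$ is pointwise a$\alpha$-fne at $y$ on $D$ with constant $\alpha_\tau$ and violation $\epsilon_\tau=\tau^2\epsilon$.
   Context: $(G,d)$ is uniquely geodesic; $(1-\tau)x\oplus\tau y$ is the point on the geodesic from $x$ to $y$ at distance $\tau d(x,y)$ from $x$; $T_\tau(x)=\{(1-\tau)x\oplus\tau x_+:x_+\in T(x)\}$. $(G,d)$ is $p$-uniformly convex ($p\in(1,\infty)$) with constant $c$ if $d(z,(1-\tau)x\oplus\tau y)^p\le(1-\tau)d(z,x)^p+\tau d(z,y)^p-\frac c2\tau(1-\tau)d(x,y)^p$ for all $\tau,x,y,z$. $\Delta^{(p,c)}(x,y,u,v)=\frac c4\big(d(x,v)^p+d(y,u)^p-d(x,u)^p-d(y,v)^p\big)$; $\psi^{(p,c)}(x,y,u,v)=\frac c2\big(d(x,u)^p+d(y,v)^p+d(u,v)^p+d(x,y)^p-d(y,u)^p-d(x,v)^p\big)$. $T$ is pointwise almost nonexpansive at $y$ on $D$ with violation $\epsilon\ge0$ if $d(x_+,y_+)^p\le(1+\epsilon)d(x,y)^p$ for all $x\in D$, $x_+\in T(x)$, $y_+\in T(y)$; pointwise almost $\alpha$-firmly nonexpansive (a$\alpha$-fne) at $y$ on $D$ with constant $\alpha\in(0,1)$ and violation $\epsilon$ if $d(x_+,y_+)^p\le(1+\epsilon)d(x,y)^p-\frac{1-\alpha}{\alpha}\psi^{(p,c)}(x,y,x_+,y_+)$ for all such $x,x_+,y_+$. Such mappings are single-valued at $y$. *)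

(* R : realType, d^p := powR (d) p  (0 `^ p = 0 for p > 0). *)
From HB Require Import structures.
From mathcomp Require Import all_boot all_order all_algebra.
From mathcomp Require Import boolp classical_sets reals exp.
Set Implicit Arguments. Unset Strict Implicit. Unset Printing Implicit Defensive.
Import Order.TTheory GRing.Theory Num.Theory.
Local Open Scope ring_scope.
Local Open Scope classical_set_scope.

Section Defs.
Variables (R : realType) (G : Type).
Implicit Types (d : G -> G -> R) (geo : R -> G -> G -> G).

Definition is_metric d : Prop :=
  (forall x y, 0 <= d x y) /\ (forall x y, d x y = 0 <-> x = y) /\
  (forall x y, d x y = d y x) /\ (forall x y z, d x z <= d x y + d y z).

(* (G,d) is uniquely geodesic, and geo t x y = (1-t)x (+) t y is the point on the
   (unique) geodesic from x to y at distance t d(x,y) from x. *)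
Definition uniquely_geodesic d geo : Prop :=
  (forall x y t, 0 <= t <= 1 ->
     d x (geo t x y) = t * d x y /\ d (geo t x y) y = (1 - t) * d x y) /\
  (forall x y z t, 0 <= t <= 1 -> d x z = t * d x y -> d z y = (1 - t) * d x y ->
     z = geo t x y) /\
  (forall (x y : G) (gam : R -> G), gam 0 = x -> gam 1 = y ->
     (forall s t, 0 <= s <= 1 -> 0 <= t <= 1 -> d (gam s) (gam t) = `|s - t| * d x y) ->
     forall t, 0 <= t <= 1 -> gam t = geo t x y).

Definition p_uniformly_convex d geo (p c : R) : Prop :=
  forall t x y z, 0 <= t <= 1 ->
    powR (d z (geo t x y)) p <=
      (1 - t) * powR (d z x) p + t * powR (d z y) p
      - c / 2 * t * (1 - t) * powR (d x y) p.

Definition Delta d (p c : R) (x y u v : G) : R :=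
  c / 4 * (powR (d x v) p + powR (d y u) p - powR (d x u) p - powR (d y v) p).

Definition psi d (p c : R) (x y u v : G) : R :=
  c / 2 * (powR (d x u) p + powR (d y v) p + powR (d u v) p + powR (d x y) p
           - powR (d y u) p - powR (d x v) p).

Definition Ttau geo (tau : R) (T : G -> set G) (x : G) : set G :=
  [set geo tau x xp | xp in T x].

(* the violation eps is any real here; eps >= 0 is imposed as a separate hypothesis
   on the given mapping T in the theorem (the computed eps_tau may be negative). *)
Definition pw_almost_nonexpansive d (p : R) (T : G -> set G) (D : set G) (y : G)
    (eps : R) : Prop :=
  forall x xp yp, D x -> T x xp -> T y yp ->
    powR (d xp yp) p <= (1 + eps) * powR (d x y) p.

Definition pw_aafne d (p c : R) (T : G -> set G) (D : set G) (y : G)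
    (alpha eps : R) : Prop :=
  0 < alpha < 1 /\
  forall x xp yp, D x -> T x xp -> T y yp ->
    powR (d xp yp) p <= (1 + eps) * powR (d x y) p
                        - (1 - alpha) / alpha * psi d p c x y xp yp.

End Defs.

From HB Require Import structures.
From mathcomp Require Import all_boot all_order all_algebra.
From mathcomp Require Import boolp classical_sets reals exp.
From mathcomp Require Import lra.
Set Implicit Arguments.
Unset Strict Implicit.
Import Order.TTheory GRing.Theory Num.Theory.
Local Open Scope ring_scope.
Local Open Scope classical_set_scope.

(* Applying p-uniform convexity three times (to the geodesics [y, y+] seen from
   x_tau, [x, x+] seen from y, and [x, x+] seen from y+) bounds
   d(x_tau, y_tau)^p by a combination of the six distances between x, y, x+, y+.
   Both parts are then linear consequences of this bound, of the regularity
   assumed of T (multiplied by a nonnegative factor), and of the hypothesis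
   comparing the psi terms of T and T_tau. *)

Section GeodesicCombination.
Variables (R : realType) (G : Type) (d : G -> G -> R) (geo : R -> G -> G -> G).
Variables (p c : R).
Hypothesis dC : forall x y, d x y = d y x.
Hypothesis ucvx : p_uniformly_convex d geo p c.

Lemma powR_dist_geo_geo_le tau x y xp yp : 0 <= tau <= 1 ->
  powR (d (geo tau x xp) (geo tau y yp)) p <=
   (1 - tau) ^+ 2 * powR (d x y) p
   + tau * (1 - tau) * (powR (d y xp) p + powR (d x yp) p)
   + tau ^+ 2 * powR (d xp yp) p
   - c / 2 * tau * (1 - tau) * (powR (d x xp) p + powR (d y yp) p).
Proof.
move=> tau01; have /andP[tau_ge0 tau_le1] := tau01.
have one_sub_ge0 : 0 <= 1 - tau by lra.
have from_xtau := ucvx y yp (geo tau x xp) tau01.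
have from_y := ucvx x xp y tau01.
have from_yp := ucvx x xp yp tau01.
rewrite (dC _ y) (dC _ yp) in from_xtau.
rewrite (dC y x) in from_y; rewrite (dC yp x) (dC yp xp) in from_yp.
have := ler_wpM2l one_sub_ge0 from_y.
have := ler_wpM2l tau_ge0 from_yp.
rewrite !expr2; lra.
Qed.

Variables (T : G -> set G) (D : set G) (y : G) (tau : R).
Hypothesis tau01 : 0 < tau < 1.

Lemma Ttau_aafne_of_nonexpansive eps : 0 <= c ->
  pw_almost_nonexpansive d p T D y eps ->
  (forall x xp yp, D x -> T x xp -> T y yp ->
     tau / (1 - tau) * psi d p c x y (geo tau x xp) (geo tau y yp)
     <= (1 - tau) * tau * psi d p c x y xp yp
        - (2 - c) / 2 * (1 - tau) * tau * (powR (d y xp) p + powR (d x yp) p)) ->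
  pw_aafne d p c (Ttau geo tau T) D y (1 - tau)
    (tau * (2 * tau + (1 - tau) * c + eps * (tau + c / 2 * (1 - tau)) - 2)).
Proof.
have /andP[tau_gt0 tau_lt1] := tau01.
have tau01w : 0 <= tau <= 1 by rewrite !ltW.
move=> c_ge0 Tne Hpsi; split; first by apply/andP; split; lra.
move=> x _ _ Dx [xp Txp <-] [yp Typ <-].
have comb := @powR_dist_geo_geo_le tau x y xp yp tau01w.
have weight_ge0 : 0 <= tau ^+ 2 + c / 2 * tau * (1 - tau).
  by apply: addr_ge0; [exact: sqr_ge0 | apply: mulr_ge0; [apply: mulr_ge0|]; lra].
have := ler_wpM2l weight_ge0 (Tne x xp yp Dx Txp Typ).
have -> : (1 - (1 - tau)) / (1 - tau) = tau / (1 - tau) by rewrite opprB addrC subrK.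
move: comb (Hpsi x xp yp Dx Txp Typ); rewrite /psi !expr2; lra.
Qed.

Lemma Ttau_aafne_of_aafne alpha eps alpha_tau :
  pw_aafne d p c T D y alpha eps -> 0 < alpha_tau < 1 ->
  (forall x xp yp, D x -> T x xp -> T y yp ->
     (1 - alpha_tau) / alpha_tau * psi d p c x y (geo tau x xp) (geo tau y yp)
     <= tau ^+ 2 * ((1 - alpha) / alpha) * psi d p c x y xp yp
        + 2 * (1 - tau) * tau * powR (d x y) p
        - 2 * (1 - tau) * tau * Delta d p c x y xp yp
        - (2 - c) / 2 * (1 - tau) * tau * (powR (d y xp) p + powR (d x yp) p)) ->
  pw_aafne d p c (Ttau geo tau T) D y alpha_tau (tau ^+ 2 * eps).
Proof.
have tau01w : 0 <= tau <= 1 by case/andP: tau01 => *; rewrite !ltW.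
move=> [_ Tfne] alpha_tau01 Hpsi; split=> // x _ _ Dx [xp Txp <-] [yp Typ <-].
have comb := @powR_dist_geo_geo_le tau x y xp yp tau01w.
have := ler_wpM2l (sqr_ge0 tau) (Tfne x xp yp Dx Txp Typ).
move: comb (Hpsi x xp yp Dx Txp Typ); rewrite /psi /Delta !expr2.
set K := (1 - alpha) / alpha; set S := (1 - alpha_tau) / alpha_tau * _; lra.
Qed.

End GeodesicCombination.

Theorem mainTheorem6 (R : realType) (G : Type) (d : G -> G -> R)
  (geo : R -> G -> G -> G) (p c : R) (D : set G) (T : G -> set G) (y : G) (tau : R) :
  is_metric d -> uniquely_geodesic d geo -> 1 < p -> 0 < c ->
  p_uniformly_convex d geo p c -> D y -> 0 < tau < 1 ->
  (forall eps : R, 0 <= eps -> pw_almost_nonexpansive d p T D y eps ->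
    (forall x xp yp, D x -> T x xp -> T y yp ->
       tau / (1 - tau) * psi d p c x y (geo tau x xp) (geo tau y yp)
       <= (1 - tau) * tau * psi d p c x y xp yp
          - (2 - c) / 2 * (1 - tau) * tau * (powR (d y xp) p + powR (d x yp) p)) ->
    pw_aafne d p c (Ttau geo tau T) D y (1 - tau)
      (tau * (2 * tau + (1 - tau) * c + eps * (tau + c / 2 * (1 - tau)) - 2))) /\
  (forall alpha eps : R, 0 <= eps -> pw_aafne d p c T D y alpha eps ->
    forall alpha_tau : R, 0 < alpha_tau < 1 ->
    (forall x xp yp, D x -> T x xp -> T y yp ->
       (1 - alpha_tau) / alpha_tau * psi d p c x y (geo tau x xp) (geo tau y yp)
       <= tau ^+ 2 * ((1 - alpha) / alpha) * psi d p c x y xp yp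
          + 2 * (1 - tau) * tau * powR (d x y) p
          - 2 * (1 - tau) * tau * Delta d p c x y xp yp
          - (2 - c) / 2 * (1 - tau) * tau * (powR (d y xp) p + powR (d x yp) p)) ->
    pw_aafne d p c (Ttau geo tau T) D y alpha_tau (tau ^+ 2 * eps)).
Proof.
move=> [_ [_ [dC _]]] _ _ c_gt0 ucvx _ tau01; split.
- move=> eps _; exact (Ttau_aafne_of_nonexpansive dC ucvx tau01 (ltW c_gt0)).
- move=> alpha eps _ Tfne alpha_tau; exact (Ttau_aafne_of_aafne dC ucvx tau01 Tfne).
Qed.
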